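(* Let $\mathcal{G}=\langle\mathbb{V},\mathbb{E}\rangle$ be as in the context, let $e:\mathbb{E}\to\{1,\dots,|\mathbb{E}|\}$ be a bijection, and let $\mathcal{F}$ be a feedback arc set of $\mathcal{G}$. Then there exists an $\mathcal{H}^{(|\mathbb{V}|\cdot(|\mathbb{E}|+1)+|\mathcal{F}|)}$-partition of $\mathcal{P}(\mathcal{G},e)$.
   Context: Standing assumption: $\mathcal{G}=\langle\mathbb{V},\mathbb{E}\rangle$ is a finite directed graph with $\mathbb{V}\ne\emptyset$, without self-loops, in which every vertex has in-degree $1$ or out-degree $1$; let $m=|\mathbb{E}|$. A feedback arc set of $\mathcal{G}$ is a subset of $\mathbb{E}$ meeting every directed cycle. For $v\in\mathbb{V}$ the gadget $\mathcal{N}_v=\langle\mathcal{V}_v,\mathcal{E}_v\rangle$ has vertices $\mathcal{V}_v=\{v_{i,j}:0\le i,j\le m\}$ (distinct for distinct $v$) and arcs $\mathcal{E}_v=\{\langle v_{i,j},v_{i,j+1}\rangle:0\le i\le m,0\le j<m\}\cup\{\langle v_{i,j},v_{i+1,j}\rangle:0\le i<m,0\le j\le m\}$. The digraph $\mathcal{P}(\mathcal{G},e)=\langle\mathbb{V}_{\mathcal{G}},\mathbb{E}_{\mathcal{G}}\rangle$ has vertex set $\mathbb{V}_{\mathcal{G}}=\bigcup_{v\in\mathbb{V}}\mathcal{V}_v\cup\mathbb{E}$ (each arc of $\mathcal{G}$ is also a vertex) and arc set $\mathbb{E}_{\mathcal{G}}=\bigcup_{v\in\mathbb{V}}\mathcal{E}_v\cup\{\langle\langle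 v,u\rangle,v_{e(\langle v,u\rangle),0}\rangle:\langle v,u\rangle\in\mathbb{E}\}\cup\{\langle\langle v,u\rangle,u_{0,e(\langle v,u\rangle)}\rangle:\langle v,u\rangle\in\mathbb{E}\}$; it is a DAG. For a DAG $G$, a partition $\pi$ of its vertex set is an $\mathcal{H}^{(k)}$-partition if $|\pi|=k$, every induced subgraph $G[P]$, $P\in\pi$, has a directed Hamiltonian path, and the quotient digraph $G/\pi$ (vertex set $\pi$, arc $\langle P,Q\rangle$ for $P\ne Q$ whenever some arc of $G$ goes from $P$ to $Q$) is acyclic. *)

From mathcomp Require Import all_boot.
Set Implicit Arguments. Unset Strict Implicit. Unset Printing Implicit Defensive.

Definition no_self_loops (V : finType) (E : {set V * V}) : Prop :=
  forall v : V, (v, v) \notin E.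

Definition indeg (V : finType) (E : {set V * V}) (v : V) : nat :=
  #|[set u | (u, v) \in E]|.
Definition outdeg (V : finType) (E : {set V * V}) (v : V) : nat :=
  #|[set u | (v, u) \in E]|.

Definition deg_cond (V : finType) (E : {set V * V}) : Prop :=
  forall v : V, indeg E v = 1 \/ outdeg E v = 1.

Definition arc_labelling (V : finType) (E : {set V * V}) (e : V * V -> nat) : Prop :=
  {in E &, injective e} /\ (forall a, a \in E -> 1 <= e a <= #|E|).

Definition arc_rel (V : finType) (E : {set V * V}) : rel V :=
  fun x y => (x, y) \in E.

(* A directed cycle: a nonempty duplicate-free cyclic sequence of vertices
   v_0 ... v_{k-1} with arcs <v_i, v_{i+1 mod k}>; its arcs are <x, next c x>. *)
Definition feedback_arc_set (V : finType) (E : {set V * V}) (F : {set V * V}) : Prop :=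
  F \subset E /\
  forall c : seq V, c != [::] -> uniq c -> cycle (arc_rel E) c ->
    exists2 x, x \in c & (x, next c x) \in F.

(* Vertices of P(G,e): gadget vertices v_{i,j} (0 <= i,j <= m) and the arcs of G. *)
Definition PV (V : finType) (E : {set V * V}) : finType :=
  ((V * 'I_(#|E|).+1 * 'I_(#|E|).+1) + {a : V * V | a \in E})%type.

Definition Prel (V : finType) (E : {set V * V}) (e : V * V -> nat) : rel (PV E) :=
  fun x y =>
    match x, y with
    | inl (v, i, j), inl (v', i', j') =>
        (v == v') &&
        (((val i == val i') && (val j' == (val j).+1)) ||
         ((val i' == (val i).+1) && (val j == val j')))
    | inr a, inl (w, i, j) =>
        ((w == (val a).1) && (val i == e (val a)) && (val j == 0)) ||
        ((w == (val a).2) && (val i == 0) && (val j == e (val a)))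
    | _, _ => false
    end.

Definition has_ham_path (W : finType) (r : rel W) (P : {set W}) : Prop :=
  exists s : seq W, perm_eq s (enum P) /\ sorted r s.

Definition quot_rel (W : finType) (r : rel W) : rel {set W} :=
  fun P Q => (P != Q) && [exists x in P, exists y in Q, r x y].

Definition acyclic_on (T : eqType) (r : rel T) (A : pred T) : Prop :=
  forall c : seq T, c != [::] -> all A c -> ~~ cycle r c.

Definition H_partition (W : finType) (r : rel W) (k : nat) (pi : {set {set W}}) : Prop :=
  [/\ partition pi [set: W],
      #|pi| = k,
      (forall P, P \in pi -> has_ham_path r P) &
      acyclic_on (quot_rel r) (mem pi)].

From mathcomp Require Import all_boot.
Set Implicit Arguments. Unset Strict Implicit. Unset Printing Implicit Defensive.

(* Group the vertices of P(G,e) into blocks: for every gadget N_v and row i,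
   the row v_{i,0} -> ... -> v_{i,m} together with the arc a of G \ F with tail v
   and e(a) = i (unique since e is injective), which is a Hamiltonian path because
   a points to v_{e(a),0}; every arc of F forms a block on its own.  An arc of P(G,e) between distinct blocks either enters a
   gadget vertex v_{i+1,j} from row i of the same gadget, or follows an arc of G \ F
   into row 0 of its head; singleton blocks have no incoming arcs.  A cycle of the
   quotient thus projects to a closed walk of G \ F which cannot stay inside one
   gadget (rows only increase), hence to a directed cycle of G avoiding F. *)

Section ClimbOrStep.
Variables (T V : eqType) (f : T -> V) (h : T -> nat) (r : rel V).

Definition climb_or_step : rel T :=
  fun x y => ((f x == f y) && (h y == (h x).+1)) || r (f x) (f y).

Lemma climb_or_step_path x p : path climb_or_step x p ->
  (exists z q, [/\ r (f x) z, path r z q & last z q = f (last x p)]) \/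
  f (last x p) = f x /\ h (last x p) = h x + size p.
Proof.
elim: p x => [|y p IHp] x /=; first by right; rewrite addn0.
case/andP=> /orP[/andP[/eqP fxy /eqP hxy] | rxy] /IHp.
  case=> [[z [q [ryz qr lq]]] | [-> ->]]; last by right; rewrite hxy fxy addSnnS.
  by left; exists z, q; rewrite fxy.
case=> [[z [q [ryz qr lq]]] | [-> _]].
  by left; exists (f y), (z :: q); rewrite /= ryz.
by left; exists (f y), [::].
Qed.

Lemma climb_or_step_cycle s : s != [::] -> cycle climb_or_step s ->
  exists c : seq V, [/\ c != [::], uniq c & cycle r c].
Proof.
case: s => [//|x p] _ /= /climb_or_step_path; rewrite last_rcons size_rcons.
case=> [[z [q [rxz qr lq]]] | [_ /eqP]]; last by rewrite -{1}[h x]addn0 eqn_add2l.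
case: (shortenP qr) lq => q' qq' uq' _ lq.
by exists (z :: q'); rewrite /= rcons_path qq' lq.
Qed.

End ClimbOrStep.

Lemma iota_succ_path k n : path (fun a b => b == a.+1) k (iota k.+1 n).
Proof. by elim: n k => //= n IHn k; rewrite eqxx IHn. Qed.

Lemma subset_imset_map (T U : finType) (f : T -> U) (A : {pred T}) (s : seq U) :
  {subset s <= f @: A} -> exists s', s = map f s'.
Proof.
elim: s => [|y s IHs] sub; first by exists [::].
have /imsetP[x _ ->] := sub y (mem_head y s).
have [s' ->] := IHs (fun z zs => sub z (mem_behead (s := y :: s) zs)).
by exists (x :: s').
Qed.

Section Fibers.
Variables (T I : finType) (f : T -> I).

Definition fiber (k : I) : {set T} := [set x | f x == k].
Definition fibers : {set {set T}} := [set fiber k | k : I].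

Variables (g : I -> T).
Hypothesis gK : cancel g f.

Lemma fiber_inj : injective fiber.
Proof.
move=> k l eq_kl; have : g k \in fiber l by rewrite -eq_kl inE gK.
by rewrite inE gK => /eqP.
Qed.

Lemma card_fibers : #|fibers| = #|I|.
Proof. by rewrite card_imset ?cardsT //; apply: fiber_inj. Qed.

Lemma fibers_partition : partition fibers [set: T].
Proof.
apply/and3P; split.
- apply/eqP/setP => x; rewrite inE; apply/bigcupP.
  by exists (fiber (f x)); rewrite ?imset_f ?inE.
- apply/trivIsetP => _ _ /imsetP[k _ ->] /imsetP[l _ ->] neq_kl.
  rewrite -setI_eq0; apply/eqP/setP => x; rewrite !inE.
  by apply: contraNF neq_kl => /andP[/eqP<- /eqP<-].
- apply/imsetP => -[k _ fiber0].
  have : g k \in fiber k by rewrite inE gK.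
  by rewrite -fiber0 inE.
Qed.

End Fibers.

Section Gadget.
Variables (V : finType) (E : {set V * V}) (e : V * V -> nat) (F : {set V * V}).
Hypotheses (lab : arc_labelling E e) (FE : F \subset E).

Local Notation m := #|E|.
Local Notation PW := (PV E).
Local Notation arc := {a : V * V | a \in E}.
Local Notation Prel := (@Prel V E e).

Definition block_index := ((V * 'I_m.+1) + {a : V * V | a \in F})%type.

Definition block_of (x : PW) : block_index :=
  match x with
  | inl (v, i, _) => inl (v, i)
  | inr a => if insub (val a) is Some b then inr b
             else inl ((val a).1, inord (e (val a)))
  end.

Definition block_rep (k : block_index) : PW :=
  match k with
  | inl (v, i) => inl (v, i, ord0)
  | inr b => inr (exist _ (val b) (subsetP FE _ (valP b)))
  end.

Lemma block_repK : cancel block_rep block_of.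
Proof.
case=> [[v i]|b] //=; case: insubP => [b' _ eq_b|]; last by rewrite (valP b).
by congr inr; apply: val_inj.
Qed.

Lemma label_lt a : a \in E -> e a < m.+1.
Proof. by case: lab => _ /(_ a) lab_a /lab_a /andP[_]; rewrite ltnS. Qed.

Lemma block_of_arc_row (a : arc) v i :
  (block_of (inr a) == inl (v, i)) = [&& (val a).1 == v, e (val a) == i & val a \notin F].
Proof.
rewrite /=; case: insubP => [b -> _|/negPf ->]; first by rewrite !andbF.
rewrite !andbT; apply/eqP/andP => [[<- <-]|[/eqP <- /eqP eq_i]].
  by rewrite inordK ?eqxx // label_lt ?(valP a).
by congr (inl (_, _)); apply: val_inj; rewrite /= -eq_i inordK // label_lt ?(valP a).
Qed.

Lemma block_of_eq_arc x b : (block_of x == inr b) = (x == block_rep (inr b)).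
Proof.
case: x => [[[v i] j]|a] //=; case: insubP => [b' _ eq_b'|a_notF].
  apply/eqP/eqP => [[<-]|[eq_a]]; first by congr inr; apply: val_inj.
  by congr inr; apply: val_inj; rewrite eq_b' eq_a.
apply/eqP/eqP => // -[eq_a]; by move: a_notF; rewrite eq_a (valP b).
Qed.

Definition gadget_row (v : V) (i : 'I_m.+1) : seq PW :=
  [seq inl (v, i, j) | j <- enum 'I_m.+1].

Definition entry_arcs (v : V) (i : 'I_m.+1) : seq PW :=
  [seq inr a | a <- enum [pred a | block_of (inr a) == inl (v, i)]].

Lemma gadget_row_sorted v i : sorted Prel (gadget_row v i).
Proof.
rewrite sorted_map; apply: (@sub_sorted _ (relpre val (fun a b => b == a.+1))).
  by move=> j j' /= /eqP ->; rewrite !eqxx.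
by rewrite -sorted_map val_enum_ord; apply: iota_succ_path.
Qed.

Lemma size_entry_arcs v i : size (entry_arcs v i) <= 1.
Proof.
rewrite size_map -cardE; apply/card_le1_eqP => a b.
rewrite !inE !block_of_arc_row // => /and3P[_ /eqP ea _] /and3P[_ /eqP eb _].
apply: val_inj; case: lab => inj_e _; apply: inj_e; rewrite ?(valP a) ?(valP b) //.
by rewrite ea eb.
Qed.

Lemma row_block_ham v i : has_ham_path Prel (fiber block_of (inl (v, i))).
Proof.
exists (entry_arcs v i ++ gadget_row v i); split.
  apply: uniq_perm; rewrite ?enum_uniq //.
    have disj : ~~ has (mem (entry_arcs v i)) (gadget_row v i).
      by apply/hasPn => _ /mapP[j _ ->]; apply/mapP => -[].
    have uniq_row : uniq (gadget_row v i).
      by rewrite map_inj_uniq; [exact: enum_uniq | move=> ? ? []].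
    have uniq_entry : uniq (entry_arcs v i).
      by rewrite map_inj_uniq; [exact: enum_uniq | exact: inr_inj].
    by rewrite cat_uniq disj uniq_row uniq_entry.
  move=> x; rewrite mem_cat mem_enum inE.
  case: x => [[[w i'] j]|a].
    have -> : (inl (w, i', j) : PW) \in entry_arcs v i = false by apply/mapP => -[].
    by apply/mapP/eqP => [[j' _ [-> -> _]]|[-> ->]] //; exists j; rewrite ?mem_enum.
  have -> : (inr a : PW) \in gadget_row v i = false by apply/mapP => -[].
  by rewrite orbF (mem_map inr_inj) mem_enum.
have := size_entry_arcs v i.
case entry: (entry_arcs v i) => [|x [|y s]] // _; first exact: gadget_row_sorted.
have : x \in entry_arcs v i by rewrite entry mem_head.
case/mapP => a; rewrite mem_enum inE block_of_arc_row // => /and3P[/eqP tail /eqP lbl _] ->.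
move: (gadget_row_sorted v i); rewrite /gadget_row enum_ordSl /= => ->.
by rewrite tail lbl !eqxx.
Qed.

Lemma arc_block_ham b : has_ham_path Prel (fiber block_of (inr b)).
Proof.
exists [:: block_rep (inr b)]; split => //.
have -> : fiber block_of (inr b) = [set block_rep (inr b)].
  by apply/setP => x; rewrite !inE block_of_eq_arc.
by rewrite enum_set1.
Qed.

Definition is_row_index (k : block_index) : bool := if k is inl _ then true else false.

(* Arc blocks never lie on a quotient cycle, so their position is irrelevant. *)
Definition index_vertex (k : block_index) : V :=
  match k with inl (v, _) => v | inr b => (val b).1 end.

Definition index_level (k : block_index) : nat :=
  match k with inl (_, i) => i | inr _ => 0 end.

Local Notation block_step :=
  (climb_or_step index_vertex index_level (arc_rel (E :\: F))).

Lemma Prel_target_row x y : Prel x y -> is_row_index (block_of y).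
Proof. by case: x y => [[[? ?] ?]|?] [[[? ?] ?]|?]. Qed.

Lemma Prel_climb_or_step x y : Prel x y -> is_row_index (block_of x) ->
  block_of x != block_of y -> block_step (block_of x) (block_of y).
Proof.
case: x y => [[[v i] j]|a] [[[w i'] j']|b] //=.
  case/andP=> /eqP <- /orP[/andP[/eqP eq_i _]|/andP[/eqP succ_i _]] _.
    by rewrite (val_inj eq_i) eqxx.
  by rewrite /climb_or_step /= eqxx succ_i eqxx.
move=> arc_a; case: insubP => [//|a_notF _] neq.
case/orP: arc_a => [/andP[/andP[/eqP w_eq /eqP lbl] _]|/andP[/andP[/eqP w_eq _] _]].
  move: neq; rewrite w_eq.
  have -> : i' = inord (e (val a)) by apply: val_inj; rewrite /= -lbl inordK // lbl.
  by rewrite eqxx.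
apply/orP; right.
by rewrite w_eq /arc_rel /= !inE -surjective_pairing a_notF (valP a).
Qed.

Lemma blocks_acyclic : feedback_arc_set E F ->
  acyclic_on (quot_rel Prel) (mem (fibers block_of)).
Proof.
move=> [_ fas] c c0 /allP/subset_imset_map[ks eq_c]; apply/negP.
rewrite {}eq_c cycle_map in c0 *; move=> cyc.
have quot_edge k l : relpre (fiber block_of) (quot_rel Prel) k l ->
    is_row_index l /\ (is_row_index k -> block_step k l).
  case/andP=> neq /existsP[x /andP[/[!inE]/eqP kx /existsP[y /andP[/[!inE]/eqP ly xy]]]].
  subst k l.
  split; first exact: Prel_target_row xy.
  move=> row_x; apply: Prel_climb_or_step xy row_x _ => //.
  by apply: contra_neq neq => ->.
have rows : all is_row_index ks.
  by apply/allP => k kks; have [] := quot_edge _ _ (prev_cycle cyc kks).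
have ks0 : ks != [::] by apply: contraNneq c0 => ->.
have cyc_step : cycle block_step ks.
  by apply: sub_in_cycle rows cyc => k l row_k _ /quot_edge[_]; apply.
have [d [d0 uniq_d cyc_d]] := climb_or_step_cycle ks0 cyc_step.
have cyc_E : cycle (arc_rel E) d.
  by apply: sub_cycle cyc_d => u w; rewrite /arc_rel inE => /andP[].
have [x x_d x_F] := fas d d0 uniq_d cyc_E.
by have := next_cycle cyc_d x_d; rewrite /arc_rel inE x_F.
Qed.

End Gadget.

Theorem lemma5p6 (V : finType) (E : {set V * V}) (e : V * V -> nat)
    (F : {set V * V}) :
  0 < #|V| -> no_self_loops E -> deg_cond E -> arc_labelling E e ->
  feedback_arc_set E F ->
  exists pi : {set {set PV E}},
    H_partition (Prel e) (#|V| * (#|E| + 1) + #|F|) pi.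
Proof.
move=> _ _ _ lab fas; have FE := fas.1.
exists (fibers (block_of e F)); split.
- exact: fibers_partition (block_repK e FE).
- by rewrite (card_fibers (block_repK e FE)) card_sum card_prod card_ord card_sig addn1.
- move=> _ /imsetP[[[v i]|b] _ ->]; first exact: row_block_ham.
  exact: arc_block_ham.
- exact: blocks_acyclic.
Qed.
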